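(* Let $N\geqslant 2$, $c_0<c_1<\dots<c_N$ in $\mathbb{R}$, and let $f:[c_0,c_N]\to[c_0,c_N]$ be a piecewise contracting map with contraction pieces $X_1=[c_0,c_1)$, $X_2=(c_1,c_2),\dots,X_N=(c_{N-1},c_N]$ which satisfies the separation property. Suppose there exists $i\in\{1,\dots,N-1\}$ such that (1) for some $j\in\{i,i+1\}$, $f_j(c_i)\in\widetilde X$ and $\{f^n(f_j(c_i))\}_{n\in\mathbb{N}}$ is dense in $\Lambda$; and (2) $c_i\in\Delta_{lr}(x_0)$ for some $x_0\in\widetilde X$. Then for any $\epsilon>0$ and any $y\in\Lambda$ such that $\Lambda\cap(y,y+\nu)\neq\emptyset$ for all $\nu>0$ (resp. $\Lambda\cap(y-\nu,y)\neq\emptyset$ for all $\nu>0$), there exists $l\geqslant 0$ with $f^l(x_0)\in(y,y+\epsilon)$ (resp. $f^l(x_0)\in(y-\epsilon,y)$).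
   Context: $\Delta=\{c_1,\dots,c_{N-1}\}$. Piecewise contracting: $f$ is discontinuous at each $c_i$, $1\leqslant i\leqslant N-1$, and there is $\lambda\in(0,1)$ with $|f(x)-f(y)|\leqslant\lambda|x-y|$ for $x,y$ in the same $X_i$; $f_i:\overline{X_i}\to[c_0,c_N]$ is the continuous extension of $f|_{X_i}$. Separation property: each $f_i$ injective and $f_i(\overline{X_i})\cap f_j(\overline{X_j})=\emptyset$ for $i\neq j$. $\widetilde X:=\bigcap_{n\geqslant0}f^{-n}([c_0,c_N]\setminus\Delta)$. Atoms: $F_i(A):=\overline{f(A\cap X_i)}$, $A_{i_1\dots i_n}:=F_{i_n}\circ\dots\circ F_{i_1}([c_0,c_N])$ is an atom of generation $n$ if non-empty; $\mathcal{A}_n$ is their set; the attractor is $\Lambda:=\bigcap_{n\geqslant1}\bigcup_{A\in\mathcal{A}_n}A$; $\mathcal{A}_n(x):=\{A\in\mathcal{A}_n:\exists t\in\mathbb{N}, f^{t+n}(x)\in A\}$. $c_i\in\Delta_{lr}(x)$ means: for every $n\geqslant1$ there is $A\in\mathcal{A}_n(x)$ with $c_i\in A$, $f^{t+n}(x)\in A\cap X_i$ and $f^{t'+n}(x)\in A\cap X_{i+1}$ for some $t,t'\in\mathbb{N}$. *)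

From Stdlib Require Import Reals List.
Open Scope R_scope.

Definition full (N : nat) (c : nat -> R) (x : R) : Prop := c 0%nat <= x <= c N.

(* Contraction pieces: X_1 = [c_0,c_1), X_k = (c_{k-1},c_k) for 1<k<N,
   X_N = (c_{N-1},c_N]  (for 1 <= k <= N, N >= 2). *)
Definition Xpiece (N : nat) (c : nat -> R) (k : nat) (x : R) : Prop :=
  (if Nat.eqb k 1 then c 0%nat <= x else c (k - 1)%nat < x) /\
  (if Nat.eqb k N then x <= c N else x < c k).

Definition closure (S : R -> Prop) (x : R) : Prop :=
  forall eps, 0 < eps -> exists y, S y /\ Rabs (x - y) < eps.

Definition cont_within (D : R -> Prop) (g : R -> R) (x : R) : Prop :=
  forall eps, 0 < eps -> exists delta, 0 < delta /\
    forall y, D y -> Rabs (y - x) < delta -> Rabs (g y - g x) < eps.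

Definition piecewise_contracting (N : nat) (c : nat -> R) (f : R -> R) : Prop :=
  (forall i, (1 <= i <= N - 1)%nat -> ~ cont_within (full N c) f (c i)) /\
  exists lam, 0 < lam < 1 /\
    forall k x y, (1 <= k <= N)%nat -> Xpiece N c k x -> Xpiece N c k y ->
      Rabs (f x - f y) <= lam * Rabs (x - y).

Definition is_extension (N : nat) (c : nat -> R) (f : R -> R) (fi : nat -> R -> R) : Prop :=
  forall k, (1 <= k <= N)%nat ->
    (forall x, c (k - 1)%nat <= x <= c k ->
       cont_within (fun y => c (k - 1)%nat <= y <= c k) (fi k) x) /\
    (forall x, Xpiece N c k x -> fi k x = f x).

Definition separation (N : nat) (c : nat -> R) (fi : nat -> R -> R) : Prop :=
  (forall k, (1 <= k <= N)%nat -> forall x y,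
     c (k - 1)%nat <= x <= c k -> c (k - 1)%nat <= y <= c k ->
     fi k x = fi k y -> x = y) /\
  (forall k l x y, (1 <= k <= N)%nat -> (1 <= l <= N)%nat -> k <> l ->
     c (k - 1)%nat <= x <= c k -> c (l - 1)%nat <= y <= c l ->
     fi k x <> fi l y).

(* X~ = intersection over n of f^{-n}([c_0,c_N] \ Delta). *)
Definition Xtilde (N : nat) (c : nat -> R) (f : R -> R) (x : R) : Prop :=
  forall n : nat, full N c (Nat.iter n f x) /\
    forall k, (1 <= k <= N - 1)%nat -> Nat.iter n f x <> c k.

Definition Fmap (N : nat) (c : nat -> R) (f : R -> R) (k : nat) (A : R -> Prop) : R -> Prop :=
  closure (fun y => exists x, A x /\ Xpiece N c k x /\ y = f x).

(* A_{i_1...i_n} = F_{i_n} o ... o F_{i_1}([c_0,c_N]) for w = [i_1; ...; i_n]. *)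
Definition atom (N : nat) (c : nat -> R) (f : R -> R) (w : list nat) : R -> Prop :=
  fold_left (fun A k => Fmap N c f k A) w (full N c).

Definition valid_word (N n : nat) (w : list nat) : Prop :=
  length w = n /\ Forall (fun k => (1 <= k <= N)%nat) w.

(* Attractor: Lambda = intersection over n >= 1 of the union of the atoms of
   generation n (a point lying in A_w makes A_w non-empty, i.e. an atom). *)
Definition attractor (N : nat) (c : nat -> R) (f : R -> R) (x : R) : Prop :=
  forall n, (1 <= n)%nat -> exists w, valid_word N n w /\ atom N c f w x.

Definition in_Delta_lr (N : nat) (c : nat -> R) (f : R -> R) (i : nat) (x : R) : Prop :=
  forall n, (1 <= n)%nat -> exists w, valid_word N n w /\
    atom N c f w (c i) /\
    (exists t, atom N c f w (Nat.iter (t + n) f x) /\ Xpiece N c i (Nat.iter (t + n) f x)) /\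
    (exists t', atom N c f w (Nat.iter (t' + n) f x) /\
                Xpiece N c (S i) (Nat.iter (t' + n) f x)).

From Stdlib Require Import Reals List Lra Lia.
Open Scope R_scope.

(* The atoms of generation n have diameter at most lam^n (c_N - c_0).  Since
   c_i is in Delta_lr(x0), for every n the orbit of x0 enters an atom of
   generation n containing c_i through the piece X_j; applying the continuous
   extension f_j, the orbit of x0 comes arbitrarily close to p = f_j(c_i).  The
   orbit of p never meets a discontinuity, so every iterate f^m is
   non-expanding near p: the orbit of x0 shadows the orbit of p, which is
   dense in Lambda, and therefore visits every open interval meeting Lambda. *)

Definition diam_le (A : R -> Prop) (D : R) : Prop :=
  forall x y, A x -> A y -> Rabs (x - y) <= D.

Lemma closure_diam_le (A : R -> Prop) (D : R) :
  diam_le A D -> diam_le (closure A) D.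
Proof.
  intros HA u v Hu Hv.
  apply Rnot_lt_le; intro Hgt.
  set (e := (Rabs (u - v) - D) / 3).
  assert (He : 0 < e) by (unfold e; lra).
  destruct (Hu e He) as [u' [Hu' Huu']].
  destruct (Hv e He) as [v' [Hv' Hvv']].
  assert (Htri : Rabs (u - v) <= Rabs (u - u') + Rabs (u' - v') + Rabs (v' - v)).
  { replace (u - v) with ((u - u') + (u' - v') + (v' - v)) by ring.
    eapply Rle_trans; [apply Rabs_triang|].
    pose proof (Rabs_triang (u - u') (u' - v')); lra. }
  rewrite (Rabs_minus_sym v' v) in Htri.
  pose proof (HA u' v' Hu' Hv').
  unfold e in *; lra.
Qed.

Lemma interval_of_Rabs_lt_Rmin (a b q x : R) :
  Rabs (x - q) < Rmin (q - a) (b - q) -> a < x < b.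
Proof.
  intros H; apply Rabs_def2 in H.
  pose proof (Rmin_l (q - a) (b - q)); pose proof (Rmin_r (q - a) (b - q)); lra.
Qed.

Lemma Xpiece_closed (N : nat) (c : nat -> R) (k : nat) (x : R) :
  Xpiece N c k x -> c (k - 1)%nat <= x <= c k.
Proof.
  unfold Xpiece; intros [Hlow Hup].
  destruct (Nat.eqb_spec k 1), (Nat.eqb_spec k N); subst; simpl in *; lra.
Qed.

Section PiecewiseContraction.

Variables (N : nat) (c : nat -> R) (f : R -> R) (lam : R).

Hypothesis N_pos : (1 <= N)%nat.
Hypothesis c_increasing : forall k, (k < N)%nat -> c k < c (S k).
Hypothesis f_maps_into : forall x, full N c x -> full N c (f x).
Hypothesis lam_range : 0 < lam < 1.
Hypothesis f_contracting : forall k x y, (1 <= k <= N)%nat ->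
  Xpiece N c k x -> Xpiece N c k y -> Rabs (f x - f y) <= lam * Rabs (x - y).

Lemma c_0_le (k : nat) : (k <= N)%nat -> c 0%nat <= c k.
Proof.
  induction k as [|k IH]; intros Hk; [lra|].
  pose proof (c_increasing k ltac:(lia)); pose proof (IH ltac:(lia)); lra.
Qed.

Lemma iter_full (n : nat) (x : R) : full N c x -> full N c (Nat.iter n f x).
Proof. induction n; simpl; auto. Qed.

Lemma locate_closed_piece (M : nat) (q : R) : (1 <= M <= N)%nat ->
  c 0%nat <= q <= c M -> exists k, (1 <= k <= M)%nat /\ c (k - 1)%nat <= q <= c k.
Proof.
  induction M as [|M IH]; intros HM Hq; [lia|].
  destruct (Nat.eq_dec M 0) as [->|HM0].
  - exists 1%nat; simpl; split; [lia|lra].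
  - destruct (Rle_dec q (c M)) as [Hle|Hgt].
    + destruct (IH ltac:(lia) ltac:(lra)) as [k [Hk Hqk]].
      exists k; split; [lia|exact Hqk].
    + exists (S M); split; [lia|]. replace (S M - 1)%nat with M by lia. lra.
Qed.

Lemma Xpiece_nbhd (q : R) : full N c q ->
  (forall k, (1 <= k <= N - 1)%nat -> q <> c k) ->
  exists k d, (1 <= k <= N)%nat /\ 0 < d /\
    forall y, full N c y -> Rabs (y - q) < d -> Xpiece N c k y.
Proof.
  intros Hq Hnot_c.
  destruct (locate_closed_piece N q ltac:(lia) Hq) as [k [Hk Hqk]].
  assert (Hlow : exists d, 0 < d /\ forall y, full N c y -> Rabs (y - q) < d ->
            if Nat.eqb k 1 then c 0%nat <= y else c (k - 1)%nat < y).
  { destruct (Nat.eqb_spec k 1).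
    - exists 1; split; [lra|]. intros y Hy _; apply Hy.
    - assert (q <> c (k - 1)%nat) by (apply Hnot_c; lia).
      exists (q - c (k - 1)%nat); split; [lra|].
      intros y _ Hy; apply Rabs_def2 in Hy; lra. }
  assert (Hup : exists d, 0 < d /\ forall y, full N c y -> Rabs (y - q) < d ->
            if Nat.eqb k N then y <= c N else y < c k).
  { destruct (Nat.eqb_spec k N).
    - exists 1; split; [lra|]. intros y Hy _; apply Hy.
    - assert (q <> c k) by (apply Hnot_c; lia).
      exists (c k - q); split; [lra|].
      intros y _ Hy; apply Rabs_def2 in Hy; lra. }
  destruct Hlow as [d1 [Hd1 Hlow]], Hup as [d2 [Hd2 Hup]].
  exists k, (Rmin d1 d2); split; [exact Hk|]; split; [now apply Rmin_glb_lt|].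
  intros y Hy Hyq; split; [apply Hlow|apply Hup]; auto;
    eapply Rlt_le_trans; eauto; [apply Rmin_l|apply Rmin_r].
Qed.

Lemma f_locally_nonexpanding (q : R) : full N c q ->
  (forall k, (1 <= k <= N - 1)%nat -> q <> c k) ->
  exists d, 0 < d /\ forall y, full N c y -> Rabs (y - q) < d ->
    Rabs (f y - f q) <= Rabs (y - q).
Proof.
  intros Hq Hnot_c.
  destruct (Xpiece_nbhd q Hq Hnot_c) as [k [d [Hk [Hd Hpiece]]]].
  exists d; split; [exact Hd|]. intros y Hy Hyq.
  assert (Hqk : Xpiece N c k q) by (apply Hpiece; [exact Hq|now rewrite Rminus_diag, Rabs_R0]).
  pose proof (f_contracting k y q Hk (Hpiece y Hy Hyq) Hqk).
  pose proof (Rabs_pos (y - q)); nra.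
Qed.

Lemma iter_locally_nonexpanding (p : R) : Xtilde N c f p -> forall m,
  exists d, 0 < d /\ forall y, full N c y -> Rabs (y - p) < d ->
    Rabs (Nat.iter m f y - Nat.iter m f p) <= Rabs (y - p).
Proof.
  intros Hp m; induction m as [|m [dm [Hdm Hm]]].
  - exists 1; split; [lra|]. intros; simpl; lra.
  - destruct (Hp m) as [Hfull Hnot_c].
    destruct (f_locally_nonexpanding _ Hfull Hnot_c) as [d [Hd Hf]].
    exists (Rmin dm d); split; [now apply Rmin_glb_lt|].
    intros y Hy Hyp.
    pose proof (Rmin_l dm d); pose proof (Rmin_r dm d).
    pose proof (Hm y Hy ltac:(lra)). simpl.
    eapply Rle_trans; [apply Hf; [now apply iter_full | lra]|lra].
Qed.

Lemma Fmap_diam_le (k : nat) (A : R -> Prop) (D : R) : (1 <= k <= N)%nat ->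
  diam_le A D -> diam_le (Fmap N c f k A) (lam * D).
Proof.
  intros Hk HA. apply closure_diam_le.
  intros u v [a [Ha [Hak ->]]] [b [Hb [Hbk ->]]].
  eapply Rle_trans; [exact (f_contracting k a b Hk Hak Hbk)|].
  apply Rmult_le_compat_l; [lra|auto].
Qed.

Lemma fold_Fmap_diam_le (w : list nat) (A : R -> Prop) (D : R) :
  Forall (fun k => (1 <= k <= N)%nat) w -> diam_le A D ->
  diam_le (fold_left (fun A k => Fmap N c f k A) w A) (lam ^ length w * D).
Proof.
  revert A D; induction w as [|k w IH]; intros A D Hw HA; simpl.
  - now rewrite Rmult_1_l.
  - inversion Hw; subst.
    replace (lam * lam ^ length w * D) with (lam ^ length w * (lam * D)) by ring.
    apply IH; auto. now apply Fmap_diam_le.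
Qed.

Lemma atoms_shrink (d : R) : 0 < d ->
  exists n, (1 <= n)%nat /\ forall w, valid_word N n w -> diam_le (atom N c f w) d.
Proof.
  intros Hd.
  set (L := c N - c 0%nat).
  assert (HL : 0 <= L) by (pose proof (c_0_le N (le_n N)); unfold L; lra).
  destruct (pow_lt_1_zero lam ltac:(rewrite Rabs_pos_eq; lra) (d / (L + 1))
              ltac:(apply Rdiv_lt_0_compat; lra)) as [n0 Hn0].
  exists (S n0); split; [lia|]. intros w [Hlen Hw] x y Hx Hy.
  specialize (Hn0 (S n0) ltac:(lia)).
  rewrite Rabs_pos_eq in Hn0 by (apply pow_le; lra).
  assert (Hpow : lam ^ S n0 * (L + 1) < d).
  { apply (Rmult_lt_compat_r (L + 1)) in Hn0; [|lra].
    now replace (d / (L + 1) * (L + 1)) with d in Hn0 by (field; lra). }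
  assert (Hfull : diam_le (full N c) L).
  { intros u v [Hu1 Hu2] [Hv1 Hv2]. apply Rabs_le; unfold L; lra. }
  pose proof (fold_Fmap_diam_le w _ _ Hw Hfull x y Hx Hy) as Hxy.
  rewrite Hlen in Hxy.
  pose proof (pow_le lam (S n0) ltac:(lra)); nra.
Qed.

Lemma orbit_approaches_fi (fi : nat -> R -> R) (i j : nat) (x0 : R) :
  is_extension N c f fi -> (1 <= i <= N - 1)%nat -> (j = i \/ j = S i) ->
  in_Delta_lr N c f i x0 ->
  forall eta, 0 < eta -> exists l, Rabs (Nat.iter l f x0 - fi j (c i)) < eta.
Proof.
  intros Hext Hi Hj HD eta Heta.
  destruct (Hext j ltac:(lia)) as [Hcont Hfi].
  assert (Hci : c (j - 1)%nat <= c i <= c j).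
  { destruct Hj as [-> | ->].
    - pose proof (c_increasing (i - 1)%nat ltac:(lia)).
      replace (S (i - 1)) with i in * by lia; lra.
    - pose proof (c_increasing i ltac:(lia)).
      replace (S i - 1)%nat with i by lia; lra. }
  destruct (Hcont (c i) Hci eta Heta) as [delta [Hdelta Hclose]].
  destruct (atoms_shrink (delta / 2) ltac:(lra)) as [n [Hn Hsmall]].
  assert (Hvisit : exists w t, valid_word N n w /\ atom N c f w (c i) /\
            atom N c f w (Nat.iter (t + n) f x0) /\ Xpiece N c j (Nat.iter (t + n) f x0)).
  { destruct (HD n Hn) as [w [Hw [Hwc [[t [Ht Hti]] [t' [Ht' Ht'i]]]]]].
    destruct Hj as [-> | ->]; [exists w, t | exists w, t']; auto. }
  destruct Hvisit as [w [t [Hw [Hwc [Hwx Hxj]]]]].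
  exists (S (t + n)); simpl.
  rewrite <- (Hfi _ Hxj).
  apply Hclose; [now apply (Xpiece_closed N)|].
  pose proof (Hsmall w Hw _ _ Hwx Hwc); lra.
Qed.

Lemma orbit_meets_open_interval (fi : nat -> R -> R) (i j : nat) (x0 : R) :
  is_extension N c f fi -> (1 <= i <= N - 1)%nat -> (j = i \/ j = S i) ->
  Xtilde N c f (fi j (c i)) ->
  (forall y, attractor N c f y ->
     closure (fun z => exists n : nat, z = Nat.iter n f (fi j (c i))) y) ->
  Xtilde N c f x0 -> in_Delta_lr N c f i x0 ->
  forall a b z, attractor N c f z -> a < z < b ->
    exists l, a < Nat.iter l f x0 < b.
Proof.
  intros Hext Hi Hj Hp Hdense Hx0 HD a b z Hz Hab.
  set (p := fi j (c i)) in *.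
  destruct (Hdense z Hz (Rmin (z - a) (b - z)) ltac:(apply Rmin_glb_lt; lra))
    as [q [[m ->] Hzq]].
  rewrite Rabs_minus_sym in Hzq.
  apply interval_of_Rabs_lt_Rmin in Hzq.
  set (q := Nat.iter m f p) in *.
  set (r := Rmin (q - a) (b - q)).
  assert (Hr : 0 < r) by (apply Rmin_glb_lt; lra).
  destruct (iter_locally_nonexpanding p Hp m) as [d [Hd Hloc]].
  destruct (orbit_approaches_fi fi i j x0 Hext Hi Hj HD (Rmin d r)
              ltac:(now apply Rmin_glb_lt)) as [l Hl]; fold p in Hl.
  pose proof (Rmin_l d r); pose proof (Rmin_r d r).
  pose proof (Hloc _ (proj1 (Hx0 l)) ltac:(lra)) as Hshadow; fold q in Hshadow.
  exists (m + l)%nat; rewrite Nat.iter_add.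
  apply (interval_of_Rabs_lt_Rmin a b q); fold r; lra.
Qed.

End PiecewiseContraction.

Theorem lemma6 (N : nat) (c : nat -> R) (f : R -> R) (fi : nat -> R -> R) (i : nat) :
  (2 <= N)%nat ->
  (forall k, (k < N)%nat -> c k < c (S k)) ->
  (forall x, full N c x -> full N c (f x)) ->
  piecewise_contracting N c f ->
  is_extension N c f fi ->
  separation N c fi ->
  (1 <= i <= N - 1)%nat ->
  (exists j, (j = i \/ j = S i) /\
     Xtilde N c f (fi j (c i)) /\
     (forall y, attractor N c f y ->
        closure (fun z => exists n : nat, z = Nat.iter n f (fi j (c i))) y)) ->
  forall x0, Xtilde N c f x0 -> in_Delta_lr N c f i x0 ->
  forall eps, 0 < eps -> forall y, attractor N c f y ->
    ((forall nu, 0 < nu -> exists z, attractor N c f z /\ y < z < y + nu) ->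
       exists l : nat, y < Nat.iter l f x0 < y + eps) /\
    ((forall nu, 0 < nu -> exists z, attractor N c f z /\ y - nu < z < y) ->
       exists l : nat, y - eps < Nat.iter l f x0 < y).
Proof.
  intros HN Hc Hf [_ [lam [Hlam Hlip]]] Hext _ Hi [j [Hj [Hp Hdense]]]
    x0 Hx0 HD eps Heps y _.
  assert (Hvisit : forall a b z, attractor N c f z -> a < z < b ->
            exists l, a < Nat.iter l f x0 < b).
  { apply (orbit_meets_open_interval N c f lam ltac:(lia) Hc Hf Hlam Hlip fi i j);
      assumption. }
  split; intros Hside; destruct (Hside eps Heps) as [z [Hz Hzy]];
    exact (Hvisit _ _ z Hz Hzy).
Qed.
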